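(* Let $K\ge 2$ and positive integers $M,N,d$ with $d\le\min(M,N)$. If the symmetric system $(M\times N,d)^K$ is proper, then \[ \frac{dK}{\min(M,N)}\le 1+\frac{\max(M,N)}{\min(M,N)}-\frac{d}{\min(M,N)}. \]
   Context: $(M\times N,d)^K$ is the $K$-user interference network where every transmitter has $M$ antennas, every receiver has $N$ antennas and every user demands $d$ degrees of freedom. Associate abstract variables: for each transmitter $j$ and $n\in\{1,\dots,d\}$, $M-d$ variables $x^{[j]}_{n,i}$; for each receiver $k$ and $m\in\{1,\dots,d\}$, $N-d$ variables $y^{[k]}_{m,i}$. Equations are the symbols $E^{mn}_{kj}$ for $j\ne k$, $m,n\in\{1,\dots,d\}$, with $\mathrm{var}(E^{mn}_{kj})=\{x^{[j]}_{n,i}\}_i\cup\{y^{[k]}_{m,i}\}_i$; $\mathcal E$ is the set of all equations. The system is proper if for every $S\subseteq\mathcal E$, $|S|\le\left|\bigcup_{E\in S}\mathrm{var}(E)\right|$. *)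

From HB Require Import structures.
From mathcomp Require Import all_boot all_order all_algebra.
Set Implicit Arguments. Unset Strict Implicit. Unset Printing Implicit Defensive.

(* (M x N, d)^K interference network.
   Variables: x^{[j]}_{n,i}  (j : 'I_K, n : 'I_d, i : 'I_(M-d))   -- inl
              y^{[k]}_{m,i}  (k : 'I_K, m : 'I_d, i : 'I_(N-d))   -- inr *)
Definition var_t (K M N d : nat) : finType :=
  (('I_K * 'I_d * 'I_(M - d)) + ('I_K * 'I_d * 'I_(N - d)))%type.

(* Equation symbols E^{mn}_{kj} encoded as (k, j, m, n). *)
Definition eqn_t (K d : nat) : finType := ('I_K * 'I_K * 'I_d * 'I_d)%type.

Definition eqns (K d : nat) : {set eqn_t K d} :=
  [set e : eqn_t K d | e.1.1.1 != e.1.1.2].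

Definition var_of (K M N d : nat) (e : eqn_t K d) : {set var_t K M N d} :=
  [set v : var_t K M N d |
    match v with
    | inl (j', n', _) => (j' == e.1.1.2) && (n' == e.2)
    | inr (k', m', _) => (k' == e.1.1.1) && (m' == e.1.2)
    end].

Definition proper_system (K M N d : nat) : Prop :=
  forall S : {set eqn_t K d}, S \subset eqns K d ->
    #|S| <= #|\bigcup_(e in S) var_of M N e|.

From HB Require Import structures.
From mathcomp Require Import all_boot all_order all_algebra.
Import Order.TTheory GRing.Theory Num.Theory.

(* Proof idea: apply properness to the largest admissible subset, the set of
   all equations.  There are K(K-1)d^2 equations (one E^{mn}_{kj} for each
   ordered pair of distinct users and each m, n), while the whole system has
   only Kd(M-d) + Kd(N-d) variables.  Properness thus gives
   K(K-1)d^2 <= Kd(M+N-2d), i.e. (K-1)d <= M+N-2d, i.e. dK + d <= M + N.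
   Since min(M,N) + max(M,N) = M + N, dividing by min(M,N) yields the
   claimed inequality. *)

Lemma card_eqns (K d : nat) : #|eqns K d| = K * (K - 1) * d * d.
Proof.
pose diag (x : 'I_K * 'I_d * 'I_d) : eqn_t K d := (x.1.1, x.1.1, x.1.2, x.2).
have diag_inj : injective diag by move=> [[a b] c] [[a' b'] c'] [-> _ -> ->].
have eqnsC : eqns K d = ~: (diag @: setT).
  apply/setP => -[[[k j] m] n]; rewrite !inE /=; apply/idP/idP.
    apply: contra => /imsetP[[[x y] z] _ [-> -> _ _]] //.
  by apply: contraNN => /eqP ->; apply/imsetP; exists (j, m, n).
rewrite eqnsC cardsCs setCK card_imset // cardsT /eqn_t !card_prod !card_ord.
by rewrite mulnBr muln1 -!mulnBl.
Qed.

Lemma card_var_t (K M N d : nat) :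
  #|var_t K M N d| = K * d * ((M - d) + (N - d)).
Proof. by rewrite /var_t card_sum !card_prod !card_ord mulnDr. Qed.

Lemma proper_count (K M N d : nat) :
  proper_system K M N d -> K * (K - 1) * d * d <= K * d * ((M - d) + (N - d)).
Proof.
move=> /(_ (eqns K d) (subxx _)); rewrite card_eqns => /leq_trans; apply.
by rewrite -card_var_t max_card.
Qed.

Lemma proper_dof_bound (K M N d : nat) :
  0 < K -> 0 < d -> d <= M -> d <= N -> proper_system K M N d ->
  d * K + d <= M + N.
Proof.
move=> K0 d0 dM dN /proper_count.
have -> : K * (K - 1) * d * d = K * d * ((K - 1) * d).
  by rewrite -!mulnA (mulnCA d).
rewrite leq_pmul2l ?muln_gt0 ?K0 // => count.
have -> : d * K + d = (K - 1) * d + d + d.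
  by rewrite -mulSnr subn1 prednK // mulnC.
by rewrite (leq_trans (leq_add (leq_add count (leqnn d)) (leqnn d))) //
  (addnAC (M - d)) subnK // -addnA subnK.
Qed.

Lemma ler_div_nat (R : numFieldType) (a b c m : nat) :
  0 < m -> a + c <= m + b ->
  (a%:R / m%:R <= 1 + b%:R / m%:R - c%:R / m%:R :> R)%R.
Proof.
move=> m0 abcm; have m0R : (0 < m%:R :> R)%R by rewrite ltr0n.
rewrite -[X in (_ <= X + _ - _)%R](divff (lt0r_neq0 m0R)) -!mulrDl -mulrBl.
by rewrite ler_pM2r ?invr_gt0 // lerBrDr -!natrD ler_nat.
Qed.

Theorem corollary1 (K M N d : nat) :
  (2 <= K)%N -> (0 < M)%N -> (0 < N)%N -> (0 < d)%N -> (d <= minn M N)%N ->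
  proper_system K M N d ->
  ((d * K)%:R / (minn M N)%:R
     <= 1 + (maxn M N)%:R / (minn M N)%:R - d%:R / (minn M N)%:R :> rat)%R.
Proof.
move=> K2 M0 N0 d0; rewrite leq_min => /andP[dM dN] proper.
apply: ler_div_nat; first by rewrite leq_min M0 N0.
rewrite addn_min_max; apply: proper_dof_bound => //.
exact: leq_trans K2.
Qed.
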